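(* For every integer $n\ge 2$, none of the Fibonacci numbers $F_1,F_2,\ldots,F_n$ is an eigenvalue of the Fibonacci--Redheffer matrix $F_R(n)$; that is, $F_j\notin\sigma(F_R(n))$ for $j=1,2,\ldots,n$.
   Context: The Fibonacci numbers are $F_1=F_2=1$, $F_n=F_{n-1}+F_{n-2}$ for $n\ge 3$. The Fibonacci--Redheffer matrix $F_R(n)=[F_R(i,j)]_{i,j=1}^n$ is defined by $F_R(i,j)=1$ if $j=1$; $F_R(i,j)=F_i$ if $i\mid j$; and $F_R(i,j)=0$ otherwise. $\sigma(A)$ denotes the set of eigenvalues of a square matrix $A$. *)

From mathcomp Require Import all_boot all_order all_algebra all_field.
Set Implicit Arguments. Unset Strict Implicit. Unset Printing Implicit Defensive.
Import GRing.Theory Num.Theory.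
Local Open Scope ring_scope.

Fixpoint fib (n : nat) : nat :=
  match n with
  | 0 => 0
  | 1 => 1
  | (m.+1 as p).+1 => fib p + fib m
  end.

(* Fibonacci--Redheffer matrix F_R(n) over algC (complex algebraic numbers).
   Row/column index k : 'I_n stands for the 1-based index k+1. *)
Definition fibRedheffer (n : nat) : 'M[algC]_n :=
  \matrix_(i < n, j < n)
    if j.+1 == 1%N then 1
    else if (i.+1 %| j.+1)%N then (fib i.+1)%:R else 0.

From mathcomp Require Import all_boot all_order all_algebra all_field.
From mathcomp Require Import zify ring.
Set Implicit Arguments. Unset Strict Implicit. Unset Printing Implicit Defensive.
Import Order.TTheory GRing.Theory Num.Theory.

(* Let x be an eigenvector of F_R(n) for F_m, where 2 <= m <= n (F_1 = F_2 covers
   j = 1). Row i reads x_1 + F_i (x_i + sum of x_k over the proper multiples k of i)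
   = F_m x_i, and row 1 reads x_1 + x_2 + ... + x_n = F_m x_1.
   If x_1 = 0, descending induction on i gives x_i = 0 for i > m and x_i / x_m >= 0
   for i < m; row 1 then says these ratios sum to 0, so x_m = 0 and hence x = 0.
   If x_1 <> 0, the numbers s_i = (F_m - F_i) x_i / x_1 satisfy
   s_i = 1 - F_i * sum_k s_k / (F_k - F_m) over the proper multiples k of i.
   Since F_(qi) - F_i >= 2^(q-1) F_i, the weights F_i / (F_k - F_m) sum to less
   than 1 for i >= m, so descending induction keeps s_i in (0, 1] down to i = m,
   contradicting s_m = 0. *)

Lemma downward_ind (P : nat -> Prop) lo hi :
  (forall i, lo <= i <= hi -> (forall k, i < k <= hi -> P k) -> P i) ->
  forall i, lo <= i <= hi -> P i.
Proof.
move=> step i; elim: {i}(hi - i) {-2}i (leqnn (hi - i)) => [|d IH] i le_d lo_i_hi.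
  by apply: step => // k; lia.
by apply: step => // k k_range; apply: IH; lia.
Qed.

Lemma fibSS k : fib k.+2 = fib k.+1 + fib k. Proof. by []. Qed.

Lemma fib_gt0 k : 0 < k -> 0 < fib k.
Proof. by elim: k => // [[|k]] // IH _; rewrite fibSS ltn_addr ?IH. Qed.

Lemma leq_fib : {homo fib : m n / m <= n}.
Proof. by apply: homo_leq => //; [move=> ???; apply: leq_trans | case=> // k; rewrite fibSS leq_addr]. Qed.

Lemma ltn_fib m n : 2 <= m -> m < n -> fib m < fib n.
Proof.
case: m => [|[|m]] // _ lt_mn; apply: leq_trans (leq_fib lt_mn).
by rewrite [fib m.+3]fibSS -addn1 leq_add2l fib_gt0.
Qed.

Lemma fib_add_ge_double i a : 2 <= i -> 2 * fib a <= fib (i + a).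
Proof.
move=> le2i; apply: leq_trans (leq_fib (leq_add le2i (leqnn a))).
by rewrite add2n fibSS mul2n -addnn leq_add2r leq_fib.
Qed.

Lemma fib_double_ge_triple i : 2 <= i -> 3 * fib i <= fib (i + i).
Proof.
case: i => [|[|[|i]]] // _.
have le_i3 : i.+3 + 3 <= i.+3 + i.+3 by rewrite leq_add2l.
by apply: leq_trans (leq_fib le_i3); rewrite addn3 !fibSS; lia.
Qed.

Lemma fib_mul_ge i q : 2 <= i -> 0 < q -> (2 ^ q + 1) * fib i <= fib (q.+1 * i).
Proof.
move=> le2i; elim: q => [|[|q] IH] // _; first by rewrite mulSn mul1n fib_double_ge_triple.
rewrite mulSn; apply: leq_trans (fib_add_ge_double _ le2i).
by have := IH isT; rewrite [2 ^ q.+2]expnS; set X := 2 ^ q.+1; nia.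
Qed.

Local Open Scope ring_scope.

Lemma eqr_fib (R : numDomainType) a b : (2 <= a)%N -> (2 <= b)%N ->
  ((fib a)%:R == (fib b)%:R :> R) = (a == b).
Proof.
move=> le2a le2b; rewrite eqr_nat.
case: (ltngtP a b) => [lt_ab|lt_ba|->]; last exact: eqxx.
  by rewrite ltn_eqF // ltn_fib.
by rewrite eq_sym ltn_eqF // ltn_fib.
Qed.

Definition proper_multiples_sum (R : nmodType) (x : nat -> R) (n i : nat) : R :=
  \sum_(i.+1 <= k < n.+1 | (i %| k)%N) x k.

Section FibonacciInverseSums.

Variable R : numFieldType.

Lemma fib_multiple_term_le m i q : (2 <= m <= i)%N -> (0 < q)%N ->
  (fib i)%:R / ((fib (q.+1 * i))%:R - (fib m)%:R) <= ((2 ^ q)%:R)^-1 :> R.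
Proof.
move=> /andP[le2m le_mi] q_gt0.
have le_mi_fib := leq_fib le_mi.
have := fib_mul_ge (leq_trans le2m le_mi) q_gt0; rewrite mulnDl mul1n => fib_qi.
have le_m_qi : (fib m <= fib (q.+1 * i))%N by lia.
have gap : (2 ^ q * fib i <= fib (q.+1 * i) - fib m)%N by lia.
have gap_gt0 : (0 < fib (q.+1 * i) - fib m)%N.
  by apply: leq_trans gap; rewrite muln_gt0 expn_gt0 fib_gt0 //; lia.
rewrite -natrB // ler_pdivrMr ?ltr0n // ler_pdivlMl ?ltr0n ?expn_gt0 //.
by rewrite -natrM ler_nat.
Qed.

(* The bound is the geometric sum 1/2 + 1/4 + ... over the multiples 2i, 3i, ... <= N. *)
Lemma fib_multiples_inv_sum_le m i N : (2 <= m <= i)%N ->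
  (fib i)%:R * proper_multiples_sum (fun k => ((fib k)%:R - (fib m)%:R)^-1) N i
    <= 1 - ((2 ^ (N %/ i).-1)%:R)^-1 :> R.
Proof.
move=> mi; have i_gt0 : (0 < i)%N by lia.
rewrite /proper_multiples_sum; elim: N => [|N IH].
  by rewrite big_geq // div0n invr1 subrr mulr0.
have [le_Ni | lt_iN] := leqP N.+1 i.
  rewrite big_geq // mulr0 subr_ge0 invf_le1 ?ler1n ?ltr0n ?expn_gt0 //.
(* [fN] keeps [/=] from unfolding [fib N.+1]. *)
set fN := fib N.+1; rewrite big_mkcond big_nat_recr //= -big_mkcond divnS //.
case: ifP => [i_dvd|_]; last by rewrite addr0 add0n.
set q := (N %/ i)%N in IH *.
have eqN : N.+1 = (q.+1 * i)%N by rewrite -(divnK i_dvd) divnS // i_dvd.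
have q_gt0 : (0 < q)%N by move: eqN lt_iN; case: (q) => //; lia.
have term : (fib i)%:R / ((fib N.+1)%:R - (fib m)%:R) <= ((2 ^ q)%:R)^-1 :> R.
  by rewrite eqN fib_multiple_term_le.
rewrite mulrDr; apply: le_trans (lerD IH term) _.
have -> : (2 ^ q)%:R = 2 * (2 ^ q.-1)%:R :> R by rewrite -natrM -expnS prednK.
set c : R := (2 ^ q.-1)%:R.
suff -> : 1 - c^-1 + (2 * c)^-1 = 1 - (2 * c)^-1 by [].
by field; rewrite pnatr_eq0 expn_eq0.
Qed.

End FibonacciInverseSums.

Section ProperMultiplesSum.

Variables (n i : nat).
Implicit Types (R : numDomainType) (V : nmodType).

Lemma eq_proper_multiples_sum V (f g : nat -> V) :
  (forall k, (i < k <= n)%N -> f k = g k) ->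
  proper_multiples_sum f n i = proper_multiples_sum g n i.
Proof.
move=> eq_fg; rewrite /proper_multiples_sum big_nat_cond [RHS]big_nat_cond.
by apply: eq_bigr => k /andP[/andP[lt_ik lt_kn] _]; apply: eq_fg; rewrite lt_ik.
Qed.

Lemma proper_multiples_sum_eq0 V (f : nat -> V) :
  (forall k, (i < k <= n)%N -> f k = 0) -> proper_multiples_sum f n i = 0.
Proof.
by move=> f0; rewrite (eq_proper_multiples_sum f0) /proper_multiples_sum big1_eq.
Qed.

Lemma ler_proper_multiples_sum R (f g : nat -> R) :
  (forall k, (i < k <= n)%N -> f k <= g k) ->
  proper_multiples_sum f n i <= proper_multiples_sum g n i.
Proof.
move=> le_fg; rewrite /proper_multiples_sum big_nat_cond [leRHS]big_nat_cond.
by apply: ler_sum => k /andP[/andP[lt_ik lt_kn] _]; apply: le_fg; rewrite lt_ik.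
Qed.

Lemma proper_multiples_sum_ge0 R (f : nat -> R) :
  (forall k, (i < k <= n)%N -> 0 <= f k) -> 0 <= proper_multiples_sum f n i.
Proof.
move=> f_ge0; rewrite /proper_multiples_sum big_nat_cond.
by apply: sumr_ge0 => k /andP[/andP[lt_ik lt_kn] _]; apply: f_ge0; rewrite lt_ik.
Qed.

Lemma proper_multiples_sum_mulr (R : pzSemiRingType) (f : nat -> R) c :
  proper_multiples_sum f n i * c = proper_multiples_sum (fun k => f k * c) n i.
Proof. exact: mulr_suml. Qed.

End ProperMultiplesSum.

Section RedhefferEigenvector.

Variables (R : numFieldType) (n m : nat) (x : nat -> R).
Hypotheses (m_ge2 : (2 <= m)%N) (m_le_n : (m <= n)%N).

Local Notation F k := ((fib k)%:R : R).
Local Notation S := (proper_multiples_sum x n).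

Hypothesis row1 : x 1 + \sum_(2 <= k < n.+1) x k = F m * x 1.
Hypothesis row : forall i, (2 <= i <= n)%N -> x 1 + F i * (x i + S i) = F m * x i.

Lemma row_rearranged i : (2 <= i <= n)%N -> (F m - F i) * x i = x 1 + F i * S i.
Proof. by move/row; rewrite mulrBl => <-; ring. Qed.

Lemma fib_sub_neq0 i : (2 <= i)%N -> i != m -> F m - F i != 0.
Proof. by move=> le2i neq_im; rewrite subr_eq0 eqr_fib // eq_sym. Qed.

Section FirstEntryZero.

Hypothesis x1_eq0 : x 1 = 0.

Lemma entry_eq_multiples i : (2 <= i <= n)%N -> i != m ->
  x i = F i * S i / (F m - F i).
Proof.
move=> i_range neq_im; have d_neq0 := fib_sub_neq0 (proj1 (andP i_range)) neq_im.
by rewrite -[F i * S i]add0r -x1_eq0 -row_rearranged // mulrC mulKf.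
Qed.

Lemma entries_eq0_from lo : (2 <= lo)%N -> ((lo <= m)%N -> x m = 0) ->
  forall i, (lo <= i <= n)%N -> x i = 0.
Proof.
move=> le2lo xm0; apply: downward_ind => i i_range IH.
have [eq_im | neq_im] := eqVneq i m; first by rewrite eq_im; apply: xm0; lia.
have i_range2 : (2 <= i <= n)%N by lia.
by rewrite (entry_eq_multiples i_range2 neq_im) proper_multiples_sum_eq0 // mulr0 mul0r.
Qed.

Lemma entry_ratio_ge0 i : (2 <= i <= n)%N -> 0 <= x i / x m.
Proof.
move: i; apply: downward_ind => i i_range IH.
case: (ltngtP i m) => [lt_im | lt_mi | ->].
- rewrite entry_eq_multiples ?(ltn_eqF lt_im) // mulrAC -(mulrA (F i)).
  apply: divr_ge0; last by rewrite subr_ge0 ler_nat leq_fib // ltnW.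
  rewrite mulr_ge0 ?ler0n // proper_multiples_sum_mulr.
  by apply: proper_multiples_sum_ge0 => k k_range; apply: IH; lia.
- by rewrite (@entries_eq0_from m.+1) ?mul0r //; lia.
- by have [-> | xm_neq0] := eqVneq (x m) 0; rewrite ?mul0r // divff.
Qed.

Lemma entry_m_eq0 : x m = 0.
Proof.
apply/eqP; apply: contraT => xm_neq0.
have : \sum_(2 <= k < n.+1) x k / x m == 0.
  by rewrite -mulr_suml; move: row1; rewrite x1_eq0 mulr0 add0r => ->; rewrite mul0r.
rewrite big_nat_cond psumr_eq0 => [/allP/(_ m)|k /andP[k_range _]].
  by rewrite mem_index_iota m_ge2 ltnS m_le_n divff // oner_eq0 => /(_ isT).
exact: entry_ratio_ge0.
Qed.

End FirstEntryZero.

Section FirstEntryNonzero.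

Hypothesis x1_neq0 : x 1 != 0.

Let s i := 1 + F i * (S i / x 1).

Lemma row_scaled i : (2 <= i <= n)%N -> (F m - F i) * x i = x 1 * s i.
Proof. by move=> i_range; rewrite row_rearranged // /s; field. Qed.

Lemma scaled_row_bounds i : (m <= i <= n)%N ->
  (forall k, (i < k <= n)%N -> 0 < s k <= 1) -> 0 < s i <= 1.
Proof.
move=> i_range s_range.
pose d k := F k - F m.
have d_gt0 k : (m < k)%N -> 0 < d k by move=> lt_mk; rewrite subr_gt0 ltr_nat ltn_fib.
pose U := proper_multiples_sum (fun k => s k / d k) n i.
pose V := proper_multiples_sum (fun k => (d k)^-1) n i.
have SU : S i / x 1 = - U.
  rewrite proper_multiples_sum_mulr (eq_proper_multiples_sum (g := fun k => - (s k / d k))).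
    by rewrite /U /proper_multiples_sum sumrN.
  move=> k k_range; have d_neq0 : d k != 0 by rewrite gt_eqF ?d_gt0 //; lia.
  by rewrite -[s k](mulKf x1_neq0) -row_scaled /d; [field; apply/andP; split | lia].
have U_ge0 : 0 <= U.
  apply: proper_multiples_sum_ge0 => k k_range.
  by have /andP[/ltW ? _] := s_range k k_range; rewrite divr_ge0 // ltW ?d_gt0 //; lia.
have U_le_V : U <= V.
  apply: ler_proper_multiples_sum => k k_range.
  have /andP[_ s_le1] := s_range k k_range.
  by rewrite -[X in _ <= X]mul1r ler_wpM2r // invr_ge0 ltW ?d_gt0 //; lia.
have FV_lt1 : F i * V < 1.
  apply: le_lt_trans (fib_multiples_inv_sum_le R n _) _; first by lia.
  by rewrite gtrBl invr_gt0 ltr0n expn_gt0.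
rewrite /s SU mulrN subr_gt0 gerBl mulr_ge0 ?ler0n //= andbT.
exact: le_lt_trans (ler_wpM2l (ler0n _ _) U_le_V) FV_lt1.
Qed.

Lemma first_entry_neq0_absurd : False.
Proof.
have s_above k : (m < k <= n)%N -> 0 < s k <= 1.
  by move: k; apply: downward_ind => k k_range IH; apply: scaled_row_bounds => //; lia.
have m_range : (m <= m <= n)%N by rewrite leqnn.
have /andP[s_m_gt0 _] := scaled_row_bounds m_range s_above.
have m_range2 : (2 <= m <= n)%N by rewrite m_ge2.
have := row_scaled m_range2; rewrite subrr mul0r => /esym/eqP.
by rewrite mulf_eq0 (negPf x1_neq0) gt_eqF.
Qed.

End FirstEntryNonzero.

Lemma redheffer_eigvec_eq0 i : (1 <= i <= n)%N -> x i = 0.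
Proof.
have x1_eq0 : x 1 = 0 by apply/eqP; apply: contraT => /first_entry_neq0_absurd.
have [-> // | neq_i1] := eqVneq i 1%N.
by move=> i_range; apply: (entries_eq0_from x1_eq0 (leqnn 2) (fun _ => entry_m_eq0 x1_eq0)); lia.
Qed.

End RedhefferEigenvector.

(* With 1-based indices, [fibRedheffer n i k = fibRedheffer_coef i.+1 k.+1]. *)
Definition fibRedheffer_coef {R : pzSemiRingType} (i k : nat) : R :=
  if k == 1%N then 1 else if (i %| k)%N then (fib i)%:R else 0.

Section FibRedhefferRows.

Variables (R : pzSemiRingType) (n : nat) (x : nat -> R).

Lemma fibRedheffer_row1 : (0 < n)%N ->
  \sum_(1 <= k < n.+1) fibRedheffer_coef 1 k * x k = x 1 + \sum_(2 <= k < n.+1) x k.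
Proof.
move=> n_gt0; rewrite big_ltn ?ltnS // /fibRedheffer_coef eqxx mul1r.
by congr (_ + _); apply: eq_big_nat => k /andP[lt1k _]; rewrite gtn_eqF // dvd1n mul1r.
Qed.

Lemma fibRedheffer_row i : (2 <= i <= n)%N ->
  \sum_(1 <= k < n.+1) fibRedheffer_coef i k * x k
    = x 1 + (fib i)%:R * (x i + proper_multiples_sum x n i).
Proof.
case/andP=> le2i le_in; have i_gt0 : (0 < i)%N by lia.
rewrite big_ltn ?ltnS ?(leq_trans _ le_in) // {1}/fibRedheffer_coef eqxx mul1r.
congr (_ + _).
rewrite (eq_big_nat _ _ (F2 := fun k => if (i %| k)%N then (fib i)%:R * x k else 0)); last first.
  by move=> k /andP[le2k _]; rewrite /fibRedheffer_coef gtn_eqF //; case: ifP; rewrite ?mul0r.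
rewrite -big_mkcond -mulr_sumr; congr (_ * _).
rewrite (big_cat_nat le2i (leqW le_in)) /= [X in X + _]big_nat_cond big1 ?add0r.
  by rewrite big_ltn_cond ?ltnS // dvdnn.
move=> k /andP[/andP[le2k lt_ki] i_dvd_k].
by have := dvdn_leq (ltnW le2k) i_dvd_k; rewrite leqNgt lt_ki.
Qed.

End FibRedhefferRows.

Lemma char_poly_trmx (R : comNzRingType) n (A : 'M[R]_n) : char_poly A^T = char_poly A.
Proof. by rewrite /char_poly -[RHS]det_tr /char_poly_mx linearB /= tr_scalar_mx map_trmx. Qed.

Lemma eigenvalue_trmx (F : fieldType) n (A : 'M[F]_n) a : eigenvalue A^T a = eigenvalue A a.
Proof. by rewrite !eigenvalue_root_char char_poly_trmx. Qed.

Lemma fibRedheffer_eigvec n (v : 'rV[algC]_n.+1) a : v *m (fibRedheffer n.+1)^T = a *: v ->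
  forall i, (1 <= i <= n.+1)%N ->
    \sum_(1 <= k < n.+2) fibRedheffer_coef i k * v 0 (inord k.-1) = a * v 0 (inord i.-1).
Proof.
move=> eigv i i_range; have := congr1 (fun M : 'rV_n.+1 => M 0 (inord i.-1)) eigv; rewrite !mxE => <-.
rewrite big_add1 big_mkord; apply: eq_bigr => k _; rewrite !mxE inord_val mulrC inordK ?prednK //.
all: lia.
Qed.

Theorem theorem4 (n : nat) (hn : (2 <= n)%N) (j : nat) (hj1 : (1 <= j)%N) (hjn : (j <= n)%N) :
  ~ eigenvalue (fibRedheffer n) (fib j)%:R.
Proof.
case: n hn hjn => [//|n] hn hjn; rewrite -eigenvalue_trmx => /eigenvalueP[v eigv].
apply/negP; rewrite negbK; apply/eqP/rowP => k; rewrite mxE.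
pose x k := v 0 (inord k.-1).
have fib_m : fib (maxn 2 j) = fib j by case: j hj1 {hjn eigv} => [|[|j]] // _; rewrite (maxn_idPr _).
set m := maxn 2 j in fib_m.
have rows := fibRedheffer_eigvec eigv; rewrite -fib_m in rows.
have m_range : (2 <= m <= n.+1)%N by rewrite /m leq_maxl geq_max /=; lia.
have row1 : x 1%N + \sum_(2 <= k < n.+2) x k = (fib m)%:R * x 1%N.
  by rewrite -fibRedheffer_row1 // rows.
have row i : (2 <= i <= n.+1)%N ->
    x 1%N + (fib i)%:R * (x i + proper_multiples_sum x n.+1 i) = (fib m)%:R * x i.
  by move=> i_range; rewrite -fibRedheffer_row // rows //; lia.
have := redheffer_eigvec_eq0 (proj1 (andP m_range)) (proj2 (andP m_range)) row1 row (i := k.+1).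
by rewrite /x /= inord_val; apply.
Qed.
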